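(* Let $\mathbf T$ be a countable homogeneous tournament and $\mathbf T^*$ an expansion of $\mathbf T$ as described in the context, and assume that $\mathrm{Age}(\mathbf T^* )$ has the Ramsey property. Then for every positive integer $n$, the class $\mathrm{Age}(\mathbf T[I_n]^* )$ has the Ramsey property.
   Context: For relational structures $\mathbf A,\mathbf B$ in the same language, $\binom{\mathbf B}{\mathbf A}$ denotes the set of substructures of $\mathbf B$ isomorphic to $\mathbf A$. For $k\ge 1$, $\mathbf C\to(\mathbf B)^{\mathbf A}_k$ means: for every map $c:\binom{\mathbf C}{\mathbf A}\to[k]=\{0,\dots,k-1\}$ there is $\mathbf B'\in\binom{\mathbf C}{\mathbf B}$ such that $c$ is constant on $\binom{\mathbf B'}{\mathbf A}$. A class $\mathcal K$ of finite structures has the Ramsey property if for all $k\ge1$ and all $\mathbf A,\mathbf B\in\mathcal K$ there is $\mathbf C\in\mathcal K$ with $\mathbf C\to(\mathbf B)^{\mathbf A}_k$. The age $\mathrm{Age}(\mathbf F)$ of a structure $\mathbf F$ is the class of finite structures embeddable in $\mathbf F$. A tournament is a directed graph in which every pair of distinct vertices carries exactly one directed edge; it is homogeneous if every isomorphism between finite substructures extends to an automorphism. $\mathbf T=(T,E^{\mathbf T})$ is a countable homogeneous tournament, and $\mathbf T^*$ is an expansion of $\mathbf T$ to a countable relational language $L_{\mathbf T^*}\supseteq\{E,<\}$ in which $<$ is interpreted as a linear order $<^*$ on $T$. For a positive integer $n$, $[n]=\{0,\dots,n-1\}$. The structure $\mathbf T[I_n]^*$ has universe $T\times[n]$ and language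 $L_{\mathbf T^*}\cup\{L_0,\dots,L_{n-1}\}$ ($L_i$ new unary symbols), interpreted as follows: $E((x,i),(y,j))$ iff $E^{\mathbf T}(x,y)$; for each $m$-ary $R\in L_{\mathbf T^*}\setminus\{E,<\}$, $R((x_1,i_1),\dots,(x_m,i_m))$ iff $R^{\mathbf T^*}(x_1,\dots,x_m)$; $(x,i)<(y,j)$ iff $x<^*y$, or $x=y$ and $i<j$; and $L_i(x,j)$ iff $j=i$. *)

From mathcomp Require Import all_boot.
Set Implicit Arguments. Unset Strict Implicit. Unset Printing Implicit Defensive.

Record lang := Lang { sym : Type; arity : sym -> nat }.

Definition interp (L : lang) (A : Type) := forall R : sym L, ('I_(arity R) -> A) -> Prop.

Record finstruc (L : lang) := FinStruc { fcar : finType; frel : interp L fcar }.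
Arguments frel {L} f _ _.
Arguments fcar {L} f.

Definition embedding (L : lang) (A B : Type) (IA : interp L A) (IB : interp L B)
  (f : A -> B) : Prop :=
  injective f /\ forall (R : sym L) (t : 'I_(arity R) -> A), IA R t <-> IB R (f \o t).

Definition Age (L : lang) (F : Type) (IF : interp L F) : finstruc L -> Prop :=
  fun A => exists f : fcar A -> F, embedding (frel A) IF f.

(* S is (the universe of) a substructure of C isomorphic to A,
   i.e. S is in binom(C, A). *)
Definition isCopy (L : lang) (C A : finstruc L) (S : {set fcar C}) : Prop :=
  exists f : fcar A -> fcar C,
    embedding (frel A) (frel C) f /\ S = [set f x | x in [set: fcar A]].

Definition arrows (L : lang) (C B A : finstruc L) (k : nat) : Prop :=
  forall c : {set fcar C} -> 'I_k,
    exists B' : {set fcar C}, isCopy B B' /\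
      exists col : 'I_k, forall A' : {set fcar C}, isCopy A A' -> A' \subset B' -> c A' = col.

Definition ramsey (L : lang) (K : finstruc L -> Prop) : Prop :=
  forall k : nat, 0 < k -> forall A B : finstruc L, K A -> K B ->
    exists C : finstruc L, K C /\ arrows C B A k.

Definition tournament (T : Type) (E : T -> T -> Prop) : Prop :=
  (forall x y, E x y -> ~ E y x) /\ (forall x y, x <> y -> E x y \/ E y x).

(* Every isomorphism between finite substructures extends to an automorphism:
   the finite substructures are images of injections f, g from a finite index
   type, and the isomorphism is g o f^-1. *)
Definition homogeneous_tournament (T : Type) (E : T -> T -> Prop) : Prop :=
  forall (A : finType) (f g : A -> T), injective f -> injective g ->
    (forall x y, E (f x) (f y) <-> E (g x) (g y)) ->
    exists h : T -> T, bijective h /\ (forall x y, E x y <-> E (h x) (h y)) /\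
      (forall a, h (f a) = g a).

Definition strict_linear_order (T : Type) (lt : T -> T -> Prop) : Prop :=
  (forall x, ~ lt x x) /\ (forall x y z, lt x y -> lt y z -> lt x z) /\
  (forall x y, x <> y -> lt x y \/ lt y x).

Inductive tsym (S : Type) := TE | TLt | TR of S.
Arguments TE {S}. Arguments TLt {S}.

Definition tar (S : Type) (ar : S -> nat) (R : tsym S) : nat :=
  match R with TE => 2 | TLt => 2 | TR s => ar s end.

Definition tlang (S : Type) (ar : S -> nat) : lang := Lang (tar ar).

Definition i0 : 'I_2 := @Ordinal 2 0 isT.
Definition i1 : 'I_2 := @Ordinal 2 1 isT.

Definition Tstar (T S : Type) (ar : S -> nat) (E lt : T -> T -> Prop)
  (RT : forall s : S, ('I_(ar s) -> T) -> Prop) : interp (tlang ar) T :=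
  fun R => match R as R0 return ('I_(tar ar R0) -> T) -> Prop with
  | TE => fun t => E (t i0) (t i1)
  | TLt => fun t => lt (t i0) (t i1)
  | TR s => fun t => RT s t
  end.

Inductive nsym (S : Type) (n : nat) := NE | NLt | NR of S | NL of 'I_n.
Arguments NE {S n}. Arguments NLt {S n}.

Definition nar (S : Type) (ar : S -> nat) (n : nat) (R : nsym S n) : nat :=
  match R with NE => 2 | NLt => 2 | NR s => ar s | NL _ => 1 end.

Definition nlang (S : Type) (ar : S -> nat) (n : nat) : lang := Lang (@nar S ar n).

Definition TInstar (T S : Type) (ar : S -> nat) (E lt : T -> T -> Prop)
  (RT : forall s : S, ('I_(ar s) -> T) -> Prop) (n : nat) :
  interp (nlang ar n) (T * 'I_n) :=
  fun R => match R as R0 return ('I_(@nar S ar n R0) -> T * 'I_n) -> Prop with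
  | NE => fun t => E (t i0).1 (t i1).1
  | NLt => fun t => lt (t i0).1 (t i1).1 \/
                    ((t i0).1 = (t i1).1 /\ ((t i0).2 < (t i1).2)%N)
  | NR s => fun t => RT s (fun j => (t j).1)
  | NL i => fun t => (t ord0).2 = i
  end.
Arguments Tstar {T S ar} E lt RT _ _.
Arguments TInstar {T S ar} E lt RT n _ _.

(* A finite X embedded in T[I_n]* has a shadow in Age(T* ): the
   substructure of T* on its first coordinates.  Given A, B in Age(T[I_n]* ),
   take C0 with C0 -> (shadow B)^(shadow A)_k and use its blow-up C0 x [n]
   (with the structure induced from T[I_n]* ), which lies in Age(T[I_n]* ).
   - Every embedding of the shadow of X into C0 lifts to an embedding of X
     into the blow-up, and conversely every embedding of X into the blow-up
     is such a lift: the tournament E detects equality of first coordinates,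
     the predicates L_i fix the second ones, and the order of T[I_n]* is
     lexicographic with first component <.
   - Copies of a finite structure in the linearly ordered C0 are rigid, so a
     colouring of the copies of A in the blow-up induces a colouring of the
     copies of shadow A in C0 (colour a copy by its lift).
   A monochromatic copy of shadow B in C0 then lifts to a copy of B all of
   whose copies of A have the same colour. *)

From mathcomp Require Import all_boot.
From mathcomp Require Import boolp.

Set Implicit Arguments. Unset Strict Implicit. Unset Printing Implicit Defensive.

Definition pair2 (A : Type) (x y : A) (j : 'I_2) : A := if val j == 0 then x else y.

Lemma embedding_comp (L : lang) (A B C : Type) (IA : interp L A) (IB : interp L B)
  (IC : interp L C) (f : A -> B) (g : B -> C) :
  embedding IA IB f -> embedding IB IC g -> embedding IA IC (g \o f).
Proof.
move=> [f_inj f_rel] [g_inj g_rel]; split; first exact: inj_comp.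
by move=> R t; rewrite f_rel g_rel.
Qed.

Lemma tournament_eqE (T : Type) (E : T -> T -> Prop) :
  tournament E -> forall x y : T, x = y <-> ~ E x y /\ ~ E y x.
Proof.
move=> [E_asym E_tot] x y; split=> [<-|[nxy nyx]].
  by split=> Exx; exact: (E_asym x x).
by have [//|/E_tot []] := pselect (x = y).
Qed.

Lemma strict_linear_order_inj (A B : Type) (lt : B -> B -> Prop) (f : A -> B) :
  injective f -> strict_linear_order lt ->
  strict_linear_order (fun x y => lt (f x) (f y)).
Proof.
move=> f_inj [irr [trans tot]]; split; first by move=> x; exact: irr.
split; first by move=> x y z; exact: trans.
by move=> x y /(contra_not (@f_inj x y)) /tot.
Qed.

Lemma lex_first (T : Type) (lt : T -> T -> Prop) (a b a' b' : T) (P Q : Prop) :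
  (forall x, ~ lt x x) -> (a = b <-> a' = b') ->
  (lt a b \/ a = b /\ P <-> lt a' b' \/ a' = b' /\ Q) -> (lt a b <-> lt a' b').
Proof.
move=> irr eqE lexE; split=> H.
  have [//|[/eqE ab _]] := proj1 lexE (or_introl H).
  by rewrite ab in H; case: (irr _ H).
have [//|[/eqE ab _]] := proj2 lexE (or_introl H).
by rewrite ab in H; case: (irr _ H).
Qed.

Section Rigidity.
(* A finite linearly ordered set is rigid: two injective maps from Z with the
   same image and the same order pattern coincide.  The proof compares ranks
   in the common image I. *)
Variables (W : finType) (ltW : W -> W -> Prop).
Hypothesis ltW_order : strict_linear_order ltW.

Definition rank (I : {set W}) (w : W) : nat := #|[set v in I | `[< ltW v w >]]|.

Lemma rank_lt (I : {set W}) (v w : W) : v \in I -> ltW v w -> rank I v < rank I w.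
Proof.
have [irr [trans _]] := ltW_order.
move=> vI lt_vw; apply: proper_card; apply/properP; split.
  apply/subsetP => u; rewrite !inE => /andP [-> /asboolP lt_uv].
  by apply/asboolP; exact: trans lt_vw.
by exists v; rewrite !inE vI /=; [apply/asboolP | apply/negP => /asboolP /irr].
Qed.

Lemma rank_image (Z : finType) (f : Z -> W) (q : Z) : injective f ->
  rank [set f x | x in [set: Z]] (f q) = #|[set r | `[< ltW (f r) (f q) >]]|.
Proof.
move=> f_inj; rewrite /rank -(card_imset _ f_inj); apply: eq_card => w.
rewrite !inE; apply/andP/imsetP => [[/imsetP [x _ ->] ltx] | [x ltx ->]].
  by exists x => //; rewrite inE.
by split; [apply: imset_f | move: ltx; rewrite inE].
Qed.

Lemma same_image_eq (Z : finType) (g g' : Z -> W) : injective g -> injective g' ->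
  (forall r q, ltW (g r) (g q) <-> ltW (g' r) (g' q)) ->
  [set g x | x in [set: Z]] = [set g' x | x in [set: Z]] -> g =1 g'.
Proof.
move=> g_inj g'_inj same_order same_image q.
set I := [set g x | x in [set: Z]].
have same_rank : rank I (g q) = rank I (g' q).
  rewrite {2}/I same_image !rank_image //; apply: eq_card => r; rewrite !inE.
  by apply/asboolP/asboolP; apply same_order.
have [//|neq] := pselect (g q = g' q).
have gI : g q \in I by apply: imset_f.
have g'I : g' q \in I by rewrite /I same_image; apply: imset_f.
have [_ [_ tot]] := ltW_order.
by case: (tot _ _ neq) => [/(rank_lt gI) | /(rank_lt g'I)]; rewrite same_rank ltnn.
Qed.
End Rigidity.

Section Blowup.
Variables (T : countType) (E : T -> T -> Prop) (S : countType) (ar : S -> nat)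
  (lt : T -> T -> Prop) (RT : forall s : S, ('I_(ar s) -> T) -> Prop) (n : nat).

Local Notation LT := (tlang ar).
Local Notation LN := (nlang ar n).
Local Notation Tst := (Tstar E lt RT).
Local Notation TIn := (TInstar E lt RT n).

Section Shadow.
Variables (X : finstruc LN) (fX : fcar X -> T * 'I_n).

Definition shadow : finstruc LT :=
  @FinStruc LT (seq_sub (codom (fun x => (fX x).1)))
    (fun R t => Tst R (fun j => ssval (t j))).

Definition shadow_map (x : fcar X) : fcar shadow :=
  SeqSub (codom_f (fun x => (fX x).1) x).

Definition shadow_rep (q : fcar shadow) : fcar X := iinv (ssvalP q).

Lemma shadow_repK (q : fcar shadow) : (fX (shadow_rep q)).1 = ssval q.
Proof. exact: (f_iinv (ssvalP q)). Qed.

Lemma shadow_map_rep (q : fcar shadow) : shadow_map (shadow_rep q) = q.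
Proof. by apply: val_inj; rewrite /= shadow_repK. Qed.

Lemma shadow_age : Age Tst shadow.
Proof. by exists (@ssval _ _); split => //; exact: val_inj. Qed.

Lemma shadow_lift_embedding (h : fcar shadow -> T) :
  embedding (frel X) TIn fX -> embedding (frel shadow) Tst h ->
  embedding (frel X) TIn (fun x => (h (shadow_map x), (fX x).2)).
Proof.
move=> [fX_inj fX_rel] [h_inj h_rel].
have eq1E x y : (fX x).1 = (fX y).1 <-> h (shadow_map x) = h (shadow_map y).
  split=> [e|/h_inj /(congr1 (@ssval _ _)) //].
  by congr h; apply: val_inj; rewrite /= e.
split.
  move=> x y [/eq1E e1 e2]; apply: fX_inj.
  by rewrite [fX x]surjective_pairing [fX y]surjective_pairing e1 e2.
case=> [t|t|s t|i t] /=; rewrite fX_rel /=.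
- exact: (h_rel TE (shadow_map \o t)).
- have := h_rel TLt (shadow_map \o t); rewrite /= => ->.
  by rewrite eq1E.
- exact: (h_rel (TR s) (shadow_map \o t)).
- done.
Qed.
End Shadow.

Section Blowup_of.
Variables (C0 : finstruc LT) (fC0 : fcar C0 -> T).
Hypothesis fC0_emb : embedding (frel C0) Tst fC0.

Definition blowup : finstruc LN :=
  @FinStruc LN (fcar C0 * 'I_n)%type
    (fun R t => TIn R (fun j => (fC0 (t j).1, (t j).2))).

Lemma blowup_age : Age TIn blowup.
Proof.
have [fC0_inj _] := fC0_emb.
exists (fun p : fcar C0 * 'I_n => (fC0 p.1, p.2)); split => //.
by move=> [a i] [b j] [/fC0_inj -> ->].
Qed.

Definition lift (X : finstruc LN) (fX : fcar X -> T * 'I_n)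
  (g : fcar (shadow fX) -> fcar C0) (x : fcar X) : fcar blowup :=
  (g (shadow_map fX x), (fX x).2).

Lemma lift_embedding (X : finstruc LN) (fX : fcar X -> T * 'I_n)
    (g : fcar (shadow fX) -> fcar C0) :
  embedding (frel X) TIn fX -> embedding (frel (shadow fX)) (frel C0) g ->
  embedding (frel X) (frel blowup) (lift g).
Proof.
move=> fX_emb g_emb.
have [lift_inj lift_rel] := shadow_lift_embedding fX_emb (embedding_comp g_emb fC0_emb).
split=> [x y [/= e1 e2]|//]; apply: lift_inj.
by rewrite /= e1 e2.
Qed.

Hypotheses (E_tournament : tournament E) (lt_order : strict_linear_order lt).

Section Embedding_into_blowup.
(* Since the
   tournament E sees exactly the first coordinates, e induces a well-defined
   map on the shadow, and that map preserves all relations of T*. *)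
Variables (X : finstruc LN) (fX : fcar X -> T * 'I_n) (e : fcar X -> fcar blowup).
Hypotheses (fX_emb : embedding (frel X) TIn fX) (e_emb : embedding (frel X) (frel blowup) e).

Lemma relation_transfer (R : sym LN) (t : 'I_(arity R) -> fcar X) :
  TIn R (fX \o t) <-> TIn R (fun j => (fC0 (e (t j)).1, (e (t j)).2)).
Proof. by rewrite -(proj2 fX_emb) (proj2 e_emb). Qed.

Lemma blowup_edge (x y : fcar X) :
  E (fX x).1 (fX y).1 <-> E (fC0 (e x).1) (fC0 (e y).1).
Proof. exact: (relation_transfer (R := NE) (pair2 x y)). Qed.

Lemma blowup_same_first (x y : fcar X) : (fX x).1 = (fX y).1 <-> (e x).1 = (e y).1.
Proof.
have [fC0_inj _] := fC0_emb.
rewrite (tournament_eqE E_tournament) !blowup_edge -(tournament_eqE E_tournament).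
by split=> [/fC0_inj | ->].
Qed.

Lemma blowup_label (x : fcar X) : (e x).2 = (fX x).2.
Proof. by have /= [-> //] := relation_transfer (R := @NL S n (fX x).2) (fun=> x). Qed.

(* On first coordinates e preserves every relation of T*; for < this uses that
   the order of T[I_n]* is lexicographic with first component lt. *)
Lemma blowup_first_relations (R : sym LT) (t : 'I_(arity R) -> fcar X) :
  Tst R (fun j => (fX (t j)).1) <-> Tst R (fun j => fC0 (e (t j)).1).
Proof.
have [fC0_inj _] := fC0_emb; have [lt_irr _] := lt_order.
case: R t => [t|t|s t] /=.
- exact: blowup_edge.
- apply: lex_first (relation_transfer (R := NLt) t) => //.
  by rewrite blowup_same_first; split=> [-> | /fC0_inj].
- exact: (relation_transfer (R := @NR S n s) t).
Qed.

Lemma embedding_is_lift : exists g : fcar (shadow fX) -> fcar C0,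
  embedding (frel (shadow fX)) (frel C0) g /\ lift g =1 e.
Proof.
pose g (q : fcar (shadow fX)) := (e (shadow_rep q)).1.
have g_map x : g (shadow_map fX x) = (e x).1.
  by apply/blowup_same_first; rewrite shadow_repK.
exists g; split; last first.
  by move=> x; rewrite /lift g_map -blowup_label -surjective_pairing.
split=> [q q' /blowup_same_first|R t].
  by rewrite !shadow_repK => /val_inj.
have -> : t = fun j => shadow_map fX (shadow_rep (t j)).
  by apply: funext => j; rewrite shadow_map_rep.
rewrite (proj2 fC0_emb) /=.
have -> : fC0 \o (g \o fun j => shadow_map fX (shadow_rep (t j))) =
          (fun j => fC0 (e (shadow_rep (t j))).1).
  by apply: funext => j; rewrite /= g_map.
exact: (blowup_first_relations (fun j => shadow_rep (t j))).
Qed.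
End Embedding_into_blowup.

Lemma embedding_lt (Y : finstruc LT) (g : fcar Y -> fcar C0) (r q : fcar Y) :
  embedding (frel Y) (frel C0) g ->
  lt (fC0 (g r)) (fC0 (g q)) <-> frel Y TLt (pair2 r q).
Proof. by move=> g_emb; rewrite (proj2 (embedding_comp g_emb fC0_emb) TLt). Qed.

Lemma lift_image_sub (A B : finstruc LN) (fA : fcar A -> T * 'I_n)
    (fB : fcar B -> T * 'I_n) (g : fcar (shadow fA) -> fcar C0)
    (gB : fcar (shadow fB) -> fcar C0) :
  [set lift g x | x in [set: fcar A]] \subset [set lift gB y | y in [set: fcar B]] ->
  [set g q | q in [set: fcar (shadow fA)]] \subset
  [set gB q | q in [set: fcar (shadow fB)]].
Proof.
move=> lift_sub; apply/subsetP => _ /imsetP [q _ ->].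
rewrite -(shadow_map_rep q).
have /(subsetP lift_sub) /imsetP [y _ /(congr1 fst) /= ->] :
  lift g (shadow_rep q) \in [set lift g x | x in [set: fcar A]] by apply: imset_f.
exact: imset_f.
Qed.

Section Induced_colouring.
(* A colouring c of the copies of A in the blow-up induces a colouring of the
   copies of the shadow of A in C0: colour a copy by the colour of its lift.
   By rigidity the lift does not depend on the chosen embedding. *)
Variables (A : finstruc LN) (fA : fcar A -> T * 'I_n) (k : nat)
  (c : {set fcar blowup} -> 'I_k).

Definition induced_colouring (S0 : {set fcar C0}) : 'I_k :=
  if pselect (isCopy (shadow fA) S0) is left copy
  then c [set lift (sval (cid copy)) x | x in [set: fcar A]] else c set0.

Lemma induced_colouringE (g : fcar (shadow fA) -> fcar C0) :
  embedding (frel (shadow fA)) (frel C0) g ->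
  induced_colouring [set g q | q in [set: fcar (shadow fA)]] =
  c [set lift g x | x in [set: fcar A]].
Proof.
move=> g_emb; rewrite /induced_colouring.
case: pselect => [copy | []]; last by exists g.
case: cid => g' [g'_emb g_image] /=.
have g'E : g' =1 g.
  apply: (@same_image_eq _ (fun a b => lt (fC0 a) (fC0 b))).
  - exact: strict_linear_order_inj (proj1 fC0_emb) lt_order.
  - exact: (proj1 g'_emb).
  - exact: (proj1 g_emb).
  - by move=> r q; rewrite !embedding_lt.
  - by rewrite -g_image.
by congr c; apply: eq_imset => x; rewrite /lift g'E.
Qed.
End Induced_colouring.
End Blowup_of.
End Blowup.

Theorem theorem4p2 (T : countType) (E : T -> T -> Prop)
  (S : countType) (ar : S -> nat) (lt : T -> T -> Prop)
  (RT : forall s : S, ('I_(ar s) -> T) -> Prop) :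
  tournament E -> homogeneous_tournament E -> strict_linear_order lt ->
  ramsey (Age (Tstar E lt RT)) ->
  forall n : nat, 0 < n -> ramsey (Age (TInstar E lt RT n)).
Proof.
move=> E_tournament _ lt_order ramseyT n _ k k_gt0 A B [fA fA_emb] [fB fB_emb].
have [C0 [[fC0 fC0_emb] C0_arrows]] :=
  ramseyT k k_gt0 _ _ (shadow_age E lt RT fA) (shadow_age E lt RT fB).
exists (blowup E lt RT n fC0); split; first exact: blowup_age.
move=> c; have [B0 [[gB [gB_emb ->]] [col mono]]] :=
  C0_arrows (induced_colouring fA c).
exists [set lift fC0 gB y | y in [set: fcar B]]; split.
  by exists (lift fC0 gB); split=> //; exact: lift_embedding.
exists col => _ [e [e_emb ->]] A'_sub.
have [g [g_emb lift_e]] := embedding_is_lift fC0_emb E_tournament lt_order fA_emb e_emb.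
rewrite -(eq_imset _ lift_e) in A'_sub *.
rewrite -(induced_colouringE fC0_emb lt_order) //; apply: mono; first by exists g.
exact: lift_image_sub A'_sub.
Qed.
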